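(* Let $\widehat{X}=X+\epsilon X_0$ and $\widehat{Y}=Y+\epsilon Y_0$ with $X,X_0,Y,Y_0\in\mathbb{R}^{n\times n}$, $Ind(\widehat{X})=1$, be such that the dual group generalized inverse of $\widehat{X}$ exists. Then $\widehat{X}\leq_{D}^{\#}\widehat{Y}$ if and only if $$X\leq^{\#}Y,\qquad X^{\#}X_0+RX= X^{\#}Y_0+RY,\qquad XR+X_0X^{\#}= YR+Y_0X^{\#},$$ where $R=-X^{\#}X_0X^{\#}+(X^{\#})^2X_0(I-XX^{\#})+(I-XX^{\#})X_0(X^{\#})^2$.
   Context: A dual number is $a+\epsilon b$ with $a,b\in\mathbb{R}$, where $\epsilon\neq 0$, $\epsilon^2=0$ and $\epsilon$ commutes with reals. A dual matrix is $A+\epsilon B$ with $A,B$ real; sums and products are computed formally using $\epsilon^2=0$, and equality means equality of real and dual parts. $X^{\#}$ is the group inverse of a real square matrix $X$. For a square dual matrix $\widehat{A}$ of dual index $1$ (i.e., $\{\widehat{A}\widehat{z}\}=\{\widehat{A}^2\widehat{z}\}$ as $\widehat{z}$ ranges over dual vectors), its dual group generalized inverse $\widehat{A}^{\#}$ is the unique dual matrix $\widehat{G}$ (if it exists) with $\widehat{A}\widehat{G}\widehat{A}=\widehat{A}$, $\widehat{G}\widehat{A}\widehat{G}=\widehat{G}$, $\widehat{A}\widehat{G}=\widehat{G}\widehat{A}$. D-group order: when $\widehat{X}^{\#}$ exists, $\widehat{X}\leq_{D}^{\#}\widehat{Y}$ means $\widehat{X}^{\#}\widehat{X}=\widehat{X}^{\#}\widehat{Y}$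 and $\widehat{X}\widehat{X}^{\#}=\widehat{Y}\widehat{X}^{\#}$. Group partial order on real matrices: $X\leq^{\#}Y$ means $X^{\#}X=X^{\#}Y$ and $XX^{\#}=YX^{\#}$. *)

From HB Require Import structures.
From mathcomp Require Import all_boot all_algebra.
From mathcomp Require Import reals.
From Stdlib Require Import ClassicalEpsilon.
Set Implicit Arguments. Unset Strict Implicit. Unset Printing Implicit Defensive.
Import GRing.Theory.
Local Open Scope ring_scope.

Section Dual.
Variables (R : realType) (n : nat).

(* A dual matrix A + eps B is represented by the pair (A, B). *)
Definition dmat := ('M[R]_n * 'M[R]_n)%type.
Definition dvec := ('cV[R]_n * 'cV[R]_n)%type.

(* (A + eps B)(C + eps D) = AC + eps (AD + BC), using eps^2 = 0 *)
Definition dmul (A B : dmat) : dmat := (A.1 *m B.1, A.1 *m B.2 + A.2 *m B.1).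
Definition dmulv (A : dmat) (z : dvec) : dvec :=
  (A.1 *m z.1, A.1 *m z.2 + A.2 *m z.1).

(* Dual index 1: {A z} = {A^2 z} as z ranges over dual vectors. *)
Definition dual_index1 (A : dmat) : Prop :=
  (forall z : dvec, exists w : dvec, dmulv A z = dmulv (dmul A A) w) /\
  (forall z : dvec, exists w : dvec, dmulv (dmul A A) z = dmulv A w).

Definition is_dual_group_inverse (A G : dmat) : Prop :=
  [/\ dmul (dmul A G) A = A, dmul (dmul G A) G = G & dmul A G = dmul G A].

Definition dginv (A : dmat) : dmat :=
  epsilon (inhabits (0, 0)) (is_dual_group_inverse A).

Definition dgroup_le (X Y : dmat) : Prop :=
  dmul (dginv X) X = dmul (dginv X) Y /\ dmul X (dginv X) = dmul Y (dginv X).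

Definition is_group_inverse (X G : 'M[R]_n) : Prop :=
  [/\ X *m G *m X = X, G *m X *m G = G & X *m G = G *m X].

Definition ginv (X : 'M[R]_n) : 'M[R]_n :=
  epsilon (inhabits 0) (is_group_inverse X).

Definition group_le (X Y : 'M[R]_n) : Prop :=
  ginv X *m X = ginv X *m Y /\ X *m ginv X = Y *m ginv X.

Definition Rmat (X X0 : 'M[R]_n) : 'M[R]_n :=
  let Xg := ginv X in
  - (Xg *m X0 *m Xg) + (Xg *m Xg) *m X0 *m (1%:M - X *m Xg)
  + (1%:M - X *m Xg) *m X0 *m (Xg *m Xg).

End Dual.

(* Write the dual group inverse of X + eps X0 as A + eps B. Its real part says
   that A is a group inverse of X, hence A = X^# by uniqueness.  The dual parts
   of G A G = G and A G = G A determine B through its four blocks with respect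
   to the idempotent P = X X^# and Q = I - P:
     P B P = - X^# X0 X^#,  P B Q = (X^#)^2 X0 Q,  Q B P = Q X0 (X^#)^2,  Q B Q = 0,
   so B = R.  The D-group order then splits into real and dual parts, which
   are exactly the three stated conditions. *)

From HB Require Import structures.
From mathcomp Require Import all_boot all_algebra.
From mathcomp Require Import reals.
From Stdlib Require Import ClassicalEpsilon.
Import GRing.Theory.
Set Implicit Arguments. Unset Strict Implicit. Unset Printing Implicit Defensive.
Local Open Scope ring_scope.

Lemma peirce_decomposition (R : pzRingType) (p q b : R) : p + q = 1 ->
  b = p * b * p + p * b * q + (q * b * p + q * b * q).
Proof. by move=> pqE; rewrite -!mulrDr pqE !mulr1 -mulrDl pqE mul1r. Qed.

Lemma group_inverse_unique (R : pzRingType) (x a a' : R) :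
  x * a * x = x -> a * x * a = a -> x * a = a * x ->
  x * a' * x = x -> a' * x * a' = a' -> x * a' = a' * x -> a' = a.
Proof.
move=> xax axa xaC xa'x a'xa' xa'C.
have xxa : x * (x * a) = x by rewrite xaC mulrA.
have xa'E : x * a' = x * a by rewrite -{2}xa'x -mulrA xa'C -mulrA xxa.
by rewrite -a'xa' -mulrA xa'E mulrA -xa'C xa'E xaC.
Qed.

Section DualPart.
Variables (R : pzRingType) (x a p q : R).
Hypotheses (xax : x * a * x = x) (axa : a * x * a = a) (xaC : x * a = a * x).
Hypotheses (xaE : x * a = p) (pqE : p + q = 1).

Let proj_x : p * x = x. Proof. by rewrite -xaE. Qed.
Let x_proj : x * p = x. Proof. by rewrite -xaE xaC mulrA. Qed.
Let ginv_proj : a * p = a. Proof. by rewrite -xaE mulrA. Qed.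
Let proj_ginv : p * a = a. Proof. by rewrite -xaE xaC. Qed.
Let proj_idem : p * p = p. Proof. by rewrite -{1}xaE -mulrA ginv_proj. Qed.

Let complE : q = 1 - p. Proof. by rewrite -pqE addrC addKr. Qed.

Let compl_x : q * x = 0. Proof. by rewrite complE mulrBl mul1r proj_x subrr. Qed.
Let x_compl : x * q = 0. Proof. by rewrite complE mulrBr mulr1 x_proj subrr. Qed.
Let compl_ginv : q * a = 0. Proof. by rewrite complE mulrBl mul1r proj_ginv subrr. Qed.
Let ginv_compl : a * q = 0. Proof. by rewrite complE mulrBr mulr1 ginv_proj subrr. Qed.
Let compl_proj : q * p = 0. Proof. by rewrite complE mulrBl mul1r proj_idem subrr. Qed.
Let proj_compl : p * q = 0. Proof. by rewrite complE mulrBr mulr1 proj_idem subrr. Qed.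

Variables (x0 b : R).
Hypotheses (dual_axa : a * x * b + (a * x0 + b * x) * a = b)
           (dual_xaC : x * b + x0 * a = a * x0 + b * x).

Let dual_axaE : b = p * b + a * x0 * a + b * p.
Proof. by rewrite -[LHS]dual_axa -xaC xaE mulrDl -(mulrA b) xaE addrA. Qed.

Lemma dual_part_proj_proj : p * b * p = - (a * x0 * a).
Proof.
have := congr1 (fun c => p * c * p) dual_axaE.
rewrite !(mulrDl, mulrDr) !mulrA proj_idem proj_ginv.
rewrite -(mulrA _ a p) ginv_proj -(mulrA _ p p) proj_idem.
rewrite -addrA -{1}[p * b * p]addr0 => /addrI /esym /eqP.
by rewrite addrC addr_eq0 => /eqP.
Qed.

Lemma dual_part_compl_compl : q * b * q = 0.
Proof.
rewrite {1}dual_axaE !(mulrDl, mulrDr) !mulrA compl_proj compl_ginv.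
by rewrite -(mulrA _ p q) proj_compl !mul0r mulr0 !addr0.
Qed.

Lemma dual_part_proj_compl : p * b * q = a * a * x0 * q.
Proof.
have := congr1 (fun c => a * c * q) dual_xaC.
rewrite !(mulrDl, mulrDr) !mulrA -(mulrA _ a q) ginv_compl -(mulrA _ x q) x_compl.
by rewrite !mulr0 !addr0 -xaC xaE.
Qed.

Lemma dual_part_compl_proj : q * b * p = q * x0 * (a * a).
Proof.
have := congr1 (fun c => q * c * a) dual_xaC.
rewrite !(mulrDl, mulrDr) !mulrA compl_x compl_ginv !mul0r !add0r.
by rewrite -(mulrA _ x a) xaE -(mulrA _ a a) => ->.
Qed.

Lemma dual_group_inverse_dual_part :
  b = - (a * x0 * a) + a * a * x0 * q + q * x0 * (a * a).
Proof.
rewrite [LHS](peirce_decomposition b pqE) dual_part_proj_proj dual_part_proj_compl.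
by rewrite dual_part_compl_proj dual_part_compl_compl addr0.
Qed.
End DualPart.

Section Matrices.
Variables (R : realType) (n : nat).

Lemma ginv_eq (X A : 'M[R]_n) : is_group_inverse X A -> ginv X = A.
Proof.
move=> [xax axa xaC].
have [xgx gxg xgC] : is_group_inverse X (ginv X) by apply: epsilon_spec; exists A.
rewrite !mulmxE in xax axa xaC xgx gxg xgC.
exact: group_inverse_unique xax axa xaC xgx gxg xgC.
Qed.

Lemma dginvE (X X0 : 'M[R]_n) :
  (exists G, is_dual_group_inverse (X, X0) G) ->
  dginv (X, X0) = (ginv X, Rmat X X0).
Proof.
move=> exG.
have : is_dual_group_inverse (X, X0) (dginv (X, X0)) by exact: epsilon_spec.
case: (dginv _) => A B; rewrite /is_dual_group_inverse /dmul /=.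
case=> [[xax _] [axa dual_axa] [xaC dual_xaC]].
have ginvE : ginv X = A by apply: ginv_eq.
rewrite /Rmat ginvE; congr (_, _).
rewrite !mulmxE in xax axa xaC dual_axa dual_xaC *.
by rewrite (dual_group_inverse_dual_part xax axa xaC erefl (subrKC _ _)
  dual_axa dual_xaC).
Qed.

End Matrices.

Theorem mainTheorem11 (R : realType) (n : nat) (X X0 Y Y0 : 'M[R]_n) :
  dual_index1 (X, X0) ->
  (exists G : dmat R n, is_dual_group_inverse (X, X0) G) ->
  dgroup_le (X, X0) (Y, Y0) <->
  [/\ group_le X Y,
      ginv X *m X0 + Rmat X X0 *m X = ginv X *m Y0 + Rmat X X0 *m Y &
      X *m Rmat X X0 + X0 *m ginv X = Y *m Rmat X X0 + Y0 *m ginv X].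
Proof.
(* Dual index 1 is not needed once the dual group inverse is known to exist. *)
move=> _ exG; rewrite /dgroup_le /group_le (dginvE exG) /dmul /=.
rewrite !pair_equal_spec.
by split=> [[[? ?] [? ?]] | [[? ?] ? ?]].
Qed.
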